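(* Let $G$ be a finite $2$-group and let $N$ be a characteristic subgroup of $G$. If $G/N$ does not satisfy property $( * )$, then $G$ does not satisfy property $( * )$.
   Context: An involution is an element of order exactly $2$. A finite group $G$ satisfies property $( * )$ if there exist a group $\Gamma$ generated by involutions and a subgroup of index $2$ in $\Gamma$ that is isomorphic to $G$. *)

From mathcomp Require Import all_boot all_fingroup all_solvable.
Set Implicit Arguments. Unset Strict Implicit. Unset Printing Implicit Defensive.
Local Open Scope group_scope.

Definition involutions (gT : finGroupType) (A : {set gT}) : {set gT} :=
  [set x in A | #[x] == 2%N].

(* Such a Gamma is necessarily finite
   (of order 2|G|), so it is represented as a group in some finGroupType. *)
Definition prop_star (gT : finGroupType) (G : {set gT}) : Prop :=
  exists (rT : finGroupType) (Gamma H : {group rT}),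
    [/\ Gamma :=: <<involutions Gamma>>,
        H \subset Gamma,
        #|Gamma : H| = 2%N &
        H \isog G].

From mathcomp Require Import all_boot all_fingroup all_solvable.
Set Implicit Arguments.
Unset Strict Implicit.
Unset Printing Implicit Defensive.

Local Open Scope group_scope.

(* If Gamma is generated by involutions and has a subgroup H of index 2 with
   H isomorphic to G, then a characteristic subgroup N of G corresponds to a
   characteristic subgroup M of H, which is normal in Gamma because H is.
   The quotient Gamma/M is still generated by involutions (images of
   involutions have order 1 or 2), and H/M has index 2 in it and is isomorphic
   to G/N.  So G/N inherits property ( * ). *)

Lemma involutions_sub (gT : finGroupType) (A : {set gT}) :
  involutions A \subset A.
Proof. by apply/subsetP=> x /setIdP[]. Qed.

Lemma morph_involution (aT rT : finGroupType) (D : {group aT})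
    (f : {morphism D >-> rT}) (x : aT) :
  x \in D -> #[x] = 2 -> f x = 1 \/ #[f x] = 2.
Proof.
move=> Dx ox; have := morph_order f Dx; rewrite ox.
have [->|fx_nt] := eqVneq (f x) 1; first by left.
rewrite -order_eq1 in fx_nt.
by move/(prime_nt_dvdP (isT : prime 2) fx_nt); right.
Qed.

Lemma morphim_gen_involutions (aT rT : finGroupType) (D Gamma : {group aT})
    (f : {morphism D >-> rT}) :
  Gamma \subset D -> Gamma :=: <<involutions Gamma>> ->
  f @* Gamma :=: <<involutions (f @* Gamma)>>.
Proof.
move=> sGD defGamma; apply/eqP; rewrite eqEsubset gen_subG involutions_sub.
rewrite andbT {1}defGamma morphim_gen ?(subset_trans (involutions_sub _)) //.
rewrite gen_subG; apply/subsetP=> _ /morphimP[x Dx /setIdP[Gx /eqP ox] ->].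
have [-> | ofx] := morph_involution f Dx ox; first exact: group1.
by apply: mem_gen; rewrite inE mem_morphim ?ofx.
Qed.

Lemma injm_quotient_isog (gT rT : finGroupType) (G N : {group gT})
    (g : {morphism G >-> rT}) :
  'injm g -> N <| G -> G / N \isog g @* G / g @* N.
Proof.
move=> injg nsNG; apply/isogP; exists (quotm g nsNG); first exact: injm_quotm.
by rewrite morphim_quotm.
Qed.

Lemma prop_star_quotient (gT : finGroupType) (G N : {group gT}) :
  N \char G -> prop_star G -> prop_star (G / N).
Proof.
move=> chNG [rT [Gamma [H [defGamma sHGamma iHGamma isoHG]]]].
have [g injg defH] := isogP (isog_symr isoHG).
set M := g @* N.
have chMH : M \char H by rewrite -defH injm_char.
have nsMGamma : M <| Gamma := char_normal_trans chMH (index2_normal sHGamma iHGamma).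
have sMH := char_sub chMH.
exists (coset_of M), (Gamma / M)%G, (H / M)%G; split.
- exact: morphim_gen_involutions (normal_norm nsMGamma) defGamma.
- exact: quotientS.
- by rewrite index_quotient_eq ?normal_norm // (setIidPr (subset_trans sMH sHGamma)).
- by have := injm_quotient_isog injg (char_normal chNG); rewrite defH isog_sym.
Qed.

Theorem lemma1 (gT : finGroupType) (G N : {group gT}) :
  2.-group G -> N \char G -> ~ prop_star (G / N) -> ~ prop_star G.
Proof. by move=> _ chNG notQ /(prop_star_quotient chNG). Qed.
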